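(* Let $\lambda_1,\lambda_2,\lambda_3,\lambda_4$ be non-negative integers with $\gcd(\lambda_1,\lambda_2,\lambda_3,\lambda_4)=1$, and let $h=\lambda_1+\lambda_2+\lambda_3+\lambda_4$. Then for every integer $\kappa\in\{2,\ldots,h-2\}$, $$\sum_{i=1}^4\left\{\frac{\kappa\lambda_i}{h}\right\}\in\{1,2,3\}.$$
   Context: For $q\in\mathbb{Q}$, $\lfloor q\rfloor=\max\{a\in\mathbb{Z}: a\le q\}$ and $\{q\}=q-\lfloor q\rfloor$ denotes the fractional part. *)

From mathcomp Require Import all_boot all_order all_algebra.
Set Implicit Arguments. Unset Strict Implicit. Unset Printing Implicit Defensive.
Import Order.TTheory GRing.Theory Num.Theory.
Local Open Scope ring_scope.

Definition fracpart (q : rat) : rat := q - (Num.floor q)%:~R.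

From mathcomp Require Import all_boot all_order all_algebra zify.
Import Order.TTheory GRing.Theory Num.Theory.

Set Implicit Arguments.
Unset Strict Implicit.
Unset Printing Implicit Defensive.

(* Since {k l_i / h} = (k l_i mod h) / h, the sum equals S / h with S the sum of
   the residues k l_i mod h.  S is congruent to k (l_1 + ... + l_4) = k h, hence
   divisible by h, and S < 4 h.  If S were 0, h would divide every k l_i, hence
   k gcd(l_i) = k, which is impossible for 0 < k < h. *)

Local Open Scope ring_scope.

Lemma fracpart_natr_div (m h : nat) : (0 < h)%N ->
  fracpart (m%:R / h%:R) = (m %% h)%N%:R / h%:R.
Proof.
move=> h_gt0; have h_neq0 : (h%:R : rat) != 0 by rewrite pnatr_eq0 -lt0n.
have -> : (m%:R : rat) / h%:R = (m %% h)%N%:R / h%:R + (m %/ h)%N%:~R.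
  rewrite {1}(divn_eq m h) natrD natrM mulrDl mulfK // addrC.
  by rewrite -[X in _ = _ + X]pmulrn.
have floor_rem : Num.floor ((m %% h)%N%:R / h%:R : rat) = 0.
  apply: floor_def; rewrite add0r /= mulr0z divr_ge0 ?ler0n //=.
  by rewrite ltr_pdivrMr ?ltr0n // mul1r ltr_nat ltn_pmod.
by rewrite /fracpart floorDrz ?intr_int // floor_rem add0r intrKfloor addrK.
Qed.

Local Close Scope ring_scope.

Section ResidueSum.

Variables (n : nat) (lam : 'I_n -> nat) (k : nat).
Let h := \sum_(i < n) lam i.

Lemma dvdn_sum_modn_mul : h %| \sum_(i < n) (k * lam i %% h).
Proof. by rewrite /dvdn modn_summ -big_distrr modnMl. Qed.

Lemma sum_modn_lt : 0 < n -> 0 < h -> \sum_(i < n) (k * lam i %% h) < n * h.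
Proof.
move=> n_gt0 h_gt0; apply: (@leq_ltn_trans (\sum_(i < n) h.-1)).
  by apply: leq_sum => i _; rewrite -ltnS prednK // ltn_pmod.
by rewrite sum_nat_const card_ord ltn_pmul2l // prednK.
Qed.

Lemma dvdn_mul_biggcdn : (forall i, h %| k * lam i) ->
  h %| k * \big[gcdn/0]_(i < n) lam i.
Proof.
move=> h_dvd; rewrite (big_morph (muln k) (muln_gcdr k) (muln0 k)).
by apply/dvdn_biggcdP => i _; apply: h_dvd.
Qed.

Lemma sum_modn_mul_neq0 : \big[gcdn/0]_(i < n) lam i = 1 -> 0 < k < h ->
  \sum_(i < n) (k * lam i %% h) != 0.
Proof.
move=> gcd1 /andP[k_gt0 k_lt_h]; apply/eqP => sum0.
have /dvdn_mul_biggcdn : forall i, h %| k * lam i.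
  by move=> i; rewrite /dvdn -leqn0 -sum0 (bigD1 i) //= leq_addr.
by rewrite gcd1 muln1 => /(dvdn_leq k_gt0); rewrite leqNgt k_lt_h.
Qed.

Lemma sum_fracpart_mul_div_sum : \big[gcdn/0]_(i < n) lam i = 1 -> 0 < k < h ->
  exists2 m, 0 < m < n &
    (\sum_(i < n) fracpart ((k * lam i)%:R / h%:R) = m%:R)%R.
Proof.
move=> gcd1 k_bounds.
have h_gt0 : 0 < h by case/andP: k_bounds => k_gt0 /(ltn_trans k_gt0).
have n_gt0 : 0 < n.
  by move: h_gt0; rewrite /h; case: (n) lam => [|//] l; rewrite big_ord0.
have sum_neq0 := sum_modn_mul_neq0 gcd1 k_bounds.
case/dvdnP: dvdn_sum_modn_mul (sum_modn_lt n_gt0 h_gt0) sum_neq0 => m sum_eq.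
rewrite sum_eq ltn_pmul2r // muln_eq0 negb_or => m_lt_n /andP[m_neq0 _].
exists m; first by rewrite lt0n m_neq0.
under eq_bigr => i _ do rewrite fracpart_natr_div //.
rewrite -mulr_suml -natr_sum sum_eq natrM mulfK //.
by rewrite pnatr_eq0 -lt0n.
Qed.

End ResidueSum.

Theorem lemma2p3 (lam : 'I_4 -> nat) (kappa : nat) :
  (\big[gcdn/0%N]_(i < 4) lam i)%N = 1%N ->
  let h := (\sum_(i < 4) lam i)%N in
  (2 <= kappa)%N -> (kappa <= h - 2)%N ->
  ((\sum_(i < 4) fracpart (((kappa * lam i)%:R : rat) / h%:R) : rat) \in
     [:: 1; 2; 3])%R.
Proof.
move=> gcd1 h kappa_ge2 kappa_le.
have kappa_bounds : 0 < kappa < h by apply/andP; split; lia.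
have [m m_bounds ->] := sum_fracpart_mul_div_sum gcd1 kappa_bounds.
by case: m m_bounds => [|[|[|[|]]]].
Qed.
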